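(* Let $\Omega$ be a verification operator for $|\Psi\rangle$ with second largest eigenvalue $\beta$ and smallest eigenvalue $\tau$, and let $0<\epsilon<1$, $0<\delta\le1/2$. Then $F(1,\delta,\Omega)\ge1-\epsilon$ (i.e. $\Omega$ verifies the target state within infidelity $\epsilon$ and significance level $\delta$ using a single test) iff $$0<\beta<\delta\quad\text{and}\quad\frac{\tau(\delta-\beta)}{1+\tau-2\beta}\ge\delta(1-\epsilon).$$
   Context: Let $\mathcal H$ be a Hilbert space of finite dimension $D\ge2$ and $|\Psi\rangle\in\mathcal H$ a unit vector. A verification operator for $|\Psi\rangle$ is a Hermitian operator $\Omega$ on $\mathcal H$ with $0\le\Omega\le1$, $\Omega|\Psi\rangle=|\Psi\rangle$, whose eigenvalue $1$ is nondegenerate. For a density operator $\rho$ on $\mathcal H^{\otimes2}$ put $p_\rho=\mathrm{tr}[(\Omega\otimes1)\rho]$, $f_\rho=\mathrm{tr}[(\Omega\otimes|\Psi\rangle\langle\Psi|)\rho]$, and $F(1,\delta,\Omega)=\min\{f_\rho/p_\rho:p_\rho\ge\delta\}$, the minimum over permutation-invariant density operators on $\mathcal H^{\otimes2}$. *)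

From HB Require Import structures.
From mathcomp Require Import all_boot all_order all_algebra.
From mathcomp Require Import complex mxtens.
From mathcomp Require Import classical_sets reals.
Set Implicit Arguments. Unset Strict Implicit. Unset Printing Implicit Defensive.
Import Order.TTheory GRing.Theory Num.Theory.
Local Open Scope ring_scope.
Local Open Scope classical_set_scope.
Local Open Scope complex_scope.

Section QV.
Variable R : rcfType.
Local Notation C := R[i].

Definition adjmx {m n} (A : 'M[C]_(m, n)) : 'M[C]_(n, m) := map_mx Num.conj A^T.

Definition hermitian {n} (A : 'M[C]_n) : Prop := adjmx A = A.

(* positive semidefinite: <v|A|v> >= 0 (in particular real) for every v *)
Definition psd {n} (A : 'M[C]_n) : Prop :=
  forall v : 'cV[C]_n, 0 <= (adjmx v *m A *m v) 0 0.

Definition unit_vector {n} (v : 'cV[C]_n) : Prop := (adjmx v *m v) 0 0 = 1.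

Definition ketbra {n} (v : 'cV[C]_n) : 'M[C]_n := v *m adjmx v.

Definition verification_operator {D} (Om : 'M[C]_D) (psi : 'cV[C]_D) : Prop :=
  [/\ unit_vector psi, hermitian Om, psd Om /\ psd (1%:M - Om),
      Om *m psi = psi & \rank (eigenspace Om 1) = 1%N].

Definition density {n} (rho : 'M[C]_n) : Prop := psd rho /\ \tr rho = 1.

(* swap operator on H (x) H, |i>|j> |-> |j>|i> *)
Definition swapmx D : 'M[C]_(D * D) :=
  \matrix_(i, j) (((mxtens_unindex i).1 == (mxtens_unindex j).2)
                  && ((mxtens_unindex i).2 == (mxtens_unindex j).1))%:R.

Definition perm_invariant {D} (rho : 'M[C]_(D * D)) : Prop :=
  swapmx D *m rho *m swapmx D = rho.

Definition p_rho {D} (Om : 'M[C]_D) (rho : 'M[C]_(D * D)) : C :=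
  \tr ((Om *t (1%:M : 'M[C]_D)) *m rho).

Definition f_rho {D} (Om : 'M[C]_D) (psi : 'cV[C]_D) (rho : 'M[C]_(D * D)) : C :=
  \tr ((Om *t ketbra psi) *m rho).

End QV.

(* F(1, delta, Omega): the minimum (here: infimum; the minimum is attained)
   of f_rho / p_rho over permutation-invariant density operators rho on
   H (x) H with p_rho >= delta. *)
Definition F1 (R : realType) {D} (delta : R) (Om : 'M[R[i]]_D) (psi : 'cV[R[i]]_D) : R :=
  inf [set x : R | exists rho : 'M[R[i]]_(D * D),
         [/\ density rho, perm_invariant rho, delta%:C <= p_rho Om rho
           & x%:C = f_rho Om psi rho / p_rho Om rho]].

From HB Require Import structures.
From mathcomp Require Import all_boot all_order all_algebra.
From mathcomp Require Import complex mxtens spectral.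
From mathcomp Require Import classical_sets reals.
From mathcomp Require Import ring lra.
Import Order.TTheory GRing.Theory Num.Theory.
Local Open Scope ring_scope.
Local Open Scope complex_scope.
Set Implicit Arguments. Unset Strict Implicit. Unset Printing Implicit Defensive.

(* Write Om = sum_k l_k |k><k| with |i0> = |Psi> up to a phase.  For rho on
   H (x) H, p_rho and f_rho only depend on the diagonal t_ij = <ij|rho|ij>,
   which for a permutation-invariant density operator is a symmetric
   probability distribution; conversely every symmetric distribution is the
   diagonal of a diagonal permutation-invariant state.  Hence F(1, delta, Om) is
   the infimum of
        f/p = (sum_i l_i t_(i,i0)) / (sum_(i,j) l_i t_ij)   over   p >= delta.
   Decomposing t around the row and column of i0 gives p <= beta + z and
   tau z <= (1 + tau - 2 beta) f for some z, so that
   f/p >= tau (delta - beta) / (delta (1 + tau - 2 beta)) when 0 < beta < delta.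
   Weight 2B on the symmetric pair {i0, j_tau} and 1 - 2B on (j_beta, j_beta)
   attains this bound, and when beta = 0 or beta >= delta the same family
   reaches f = 0. *)

(** * A linear-fractional program over symmetric distributions *)

Section IndicatorSums.
Variable S : pzSemiRingType.

Lemma sum_nat_eql n (a : 'I_n) (F : 'I_n -> S) : \sum_l (l == a)%:R * F l = F a.
Proof.
rewrite (bigD1 a) //= eqxx mul1r big1 ?addr0 // => l /negbTE ->.
by rewrite mul0r.
Qed.

Lemma sum_nat_eqr n (a : 'I_n) (F : 'I_n -> S) : \sum_l F l * (l == a)%:R = F a.
Proof.
rewrite (bigD1 a) //= eqxx mulr1 big1 ?addr0 // => l /negbTE ->.
by rewrite mulr0.
Qed.

Lemma sum_nat_eq2 n (a b : 'I_n) (F : 'I_n -> 'I_n -> S) :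
  \sum_i \sum_j F i j * ((i == a) && (j == b))%:R = F a b.
Proof.
rewrite (bigD1 a) //= [X in _ + X]big1 ?addr0; last first.
  by move=> i /negbTE ai; apply: big1 => j _; rewrite ai mulr0.
by rewrite -(sum_nat_eqr b); apply: eq_bigr => j _; rewrite eqxx.
Qed.

End IndicatorSums.

Section SymmetricDistributions.
Variables (R : realFieldType) (D : nat).
Implicit Types t : 'I_D -> 'I_D -> R.

Definition sym_distribution t :=
  [/\ forall i j, 0 <= t i j, forall i j, t i j = t j i & \sum_i \sum_j t i j = 1].

Variables (l : 'I_D -> R) (i0 : 'I_D).

Definition pass_prob t := \sum_i \sum_j l i * t i j.

Definition target_prob t := \sum_i l i * t i i0.

Definition target_ratios (delta : R) : set R :=
  [set x | exists t, [/\ sym_distribution t, delta <= pass_prob t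
                       & x = target_prob t / pass_prob t]].

Hypothesis l_ge0 : forall i, 0 <= l i.

Lemma target_ratios_ge0 delta x : 0 < delta -> target_ratios delta x -> 0 <= x.
Proof.
move=> delta_gt0 [t [[t_ge0 _ _] delta_le ->]].
apply: divr_ge0; last lra.
by apply: sumr_ge0 => i _; apply: mulr_ge0.
Qed.

Variables (tau beta : R).
Hypothesis l_i0 : l i0 = 1.
Hypothesis l_range : forall j, j != i0 -> tau <= l j <= beta.

(* [a], [b], [c] are the masses of [t] on [(i0, i0)], on the rest of the row
   of [i0] and off the row and column of [i0]; [x], [y] are the [l]-weighted
   masses of the rest of the column of [i0] and of the off-diagonal block. *)
Lemma sym_distribution_blocks t : sym_distribution t ->
  exists a b x y c, [/\ 0 <= a, 0 <= b, 0 <= c, a + 2 * b + c = 1 & tau * b <= x]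
    /\ [/\ y <= beta * c, pass_prob t = a + b + x + y & target_prob t = a + x].
Proof.
move=> [t_ge0 t_sym t_mass].
exists (t i0 i0), (\sum_(j | j != i0) t i0 j), (\sum_(i | i != i0) l i * t i i0),
  (\sum_(i | i != i0) \sum_(j | j != i0) l i * t i j),
  (\sum_(i | i != i0) \sum_(j | j != i0) t i j).
have row_col : \sum_(j | j != i0) t i0 j = \sum_(i | i != i0) t i i0.
  by apply: eq_bigr => i _; rewrite t_sym.
split; split.
- exact: t_ge0.
- by apply: sumr_ge0 => j _.
- by apply: sumr_ge0 => i _; apply: sumr_ge0 => j _.
- have split_rows : \sum_(i | i != i0) \sum_j t i j = \sum_(i | i != i0) t i i0
      + \sum_(i | i != i0) \sum_(j | j != i0) t i j.
    by rewrite -big_split; apply: eq_bigr => i _; rewrite (bigD1 i0).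
  rewrite -[RHS]t_mass [RHS](bigD1 i0) //= split_rows.
  by rewrite [\sum_j t i0 j](bigD1 i0) //= -row_col; lra.
- rewrite row_col mulr_sumr; apply: ler_sum => i ni; apply: ler_wpM2r => //.
  by case/andP: (l_range ni).
- rewrite mulr_sumr; apply: ler_sum => i ni; rewrite mulr_sumr; apply: ler_sum => j _.
  by apply: ler_wpM2r => //; case/andP: (l_range ni).
- rewrite /pass_prob (bigD1 i0) //= l_i0.
  under eq_bigr => j _ do rewrite mul1r.
  rewrite (bigD1 i0) //= -!addrA; congr (_ + _); congr (_ + _).
  by rewrite -big_split /=; apply: eq_bigr => i _; rewrite (bigD1 i0).
- by rewrite /target_prob (bigD1 i0) //= l_i0 mul1r.
Qed.

Lemma pass_prob_le_target t : sym_distribution t -> 0 <= tau -> 0 <= beta <= 1 / 2 ->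
  exists2 z, pass_prob t <= beta + z & tau * z <= (1 + tau - 2 * beta) * target_prob t.
Proof.
move=> /sym_distribution_blocks [a [b [x [y [c [[a0 b0 c0 mass xb] [yc -> ->]]]]]]].
move=> tau0 /andP[beta0 beta2].
exists ((1 - beta) * a + (1 - 2 * beta) * b + x).
  have beta_c : beta * c = beta * (1 - a - 2 * b) by congr (_ * _); lra.
  lra.
have col_ge0 : 0 <= (1 - 2 * beta) * (x - tau * b) by apply: mulr_ge0; lra.
have diag_ge0 : 0 <= tau * beta * a by rewrite mulr_ge0 // mulr_ge0.
nra.
Qed.

Lemma target_ratio_lb delta t : 0 <= tau -> 0 < beta < delta -> delta <= 1 / 2 ->
  sym_distribution t -> delta <= pass_prob t ->
  tau * (delta - beta) / (delta * (1 + tau - 2 * beta)) <= target_prob t / pass_prob t.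
Proof.
move=> tau0 /andP[beta_gt0 beta_delta] delta2 tD delta_p.
have beta_range : 0 <= beta <= 1 / 2 by apply/andP; split; lra.
have [z p_le tz] := pass_prob_le_target tD tau0 beta_range.
set p := pass_prob t in delta_p p_le *; set f := target_prob t in tz *.
set s := 1 + tau - 2 * beta in tz *.
have s_gt0 : 0 < s by rewrite /s; lra.
have p_gt0 : 0 < p by lra.
have p_slack : tau * (delta - beta) * p <= tau * (delta - beta) * (beta + z).
  by rewrite ler_wpM2l // mulr_ge0 //; lra.
have slack_z : tau * (delta - beta) * (beta + z) <= tau * delta * z.
  have : 0 <= tau * beta * (beta + z - delta) by rewrite !mulr_ge0 //; lra.
  nra.
have z_target : tau * delta * z <= delta * s * f.
  have delta_ge0 : 0 <= delta by lra.
  by have := ler_wpM2l delta_ge0 tz; lra.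
rewrite ler_pdivlMr // mulrAC ler_pdivrMr ?mulr_gt0 //; lra.
Qed.

Variables (jt jb : 'I_D).
Hypotheses (jt_i0 : jt != i0) (jb_i0 : jb != i0) (l_jt : l jt = tau) (l_jb : l jb = beta).

Definition mix_witness (B : R) i j : R :=
  B * ((i == i0) && (j == jt))%:R + B * ((i == jt) && (j == i0))%:R
  + (1 - 2 * B) * ((i == jb) && (j == jb))%:R.

Lemma sum_mix_witness B (F : 'I_D -> 'I_D -> R) :
  \sum_i \sum_j F i j * mix_witness B i j = B * F i0 jt + B * F jt i0 + (1 - 2 * B) * F jb jb.
Proof.
rewrite -!(sum_nat_eq2 _ _ F) !mulr_sumr -!big_split /=; apply: eq_bigr => i _.
by rewrite !mulr_sumr -!big_split /=; apply: eq_bigr => j _; rewrite /mix_witness; ring.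
Qed.

Lemma mix_witness_sym_distribution B : 0 <= B <= 1 / 2 -> sym_distribution (mix_witness B).
Proof.
move=> /andP[B_ge0 B_le]; split.
- move=> i j; rewrite /mix_witness.
  by rewrite !addr_ge0 // mulr_ge0 ?ler0n //; lra.
- move=> i j; rewrite /mix_witness [(j == i0) && _]andbC [(j == jt) && _]andbC.
  by rewrite [(j == jb) && _]andbC; ring.
- have := sum_mix_witness B (fun _ _ => 1); under eq_bigr do under eq_bigr do rewrite mul1r.
  by move=> ->; ring.
Qed.

Lemma pass_prob_mix B : pass_prob (mix_witness B) = B + B * tau + (1 - 2 * B) * beta.
Proof. by rewrite /pass_prob sum_mix_witness l_i0 l_jt l_jb; ring. Qed.

Lemma target_prob_mix B : target_prob (mix_witness B) = B * tau.
Proof.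
rewrite /target_prob.
have -> : \sum_i l i * mix_witness B i i0
          = \sum_i \sum_j (l i * (j == i0)%:R) * mix_witness B i j.
  apply: eq_bigr => i _; symmetry.
  by rewrite (eq_bigr (fun j => l i * mix_witness B i j * (j == i0)%:R)) ?sum_nat_eqr // => j _; ring.
by rewrite sum_mix_witness eqxx (negbTE jb_i0) (negbTE jt_i0) l_jt /=; ring.
Qed.

Lemma mix_ratio delta B : 0 <= B <= 1 / 2 ->
  delta <= B + B * tau + (1 - 2 * B) * beta ->
  target_ratios delta (B * tau / (B + B * tau + (1 - 2 * B) * beta)).
Proof.
move=> B_range delta_le; exists (mix_witness B).
by rewrite pass_prob_mix target_prob_mix; split=> //; exact: mix_witness_sym_distribution.
Qed.

End SymmetricDistributions.

Section TargetRatiosInf.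
Variables (R : realType) (D : nat) (l : 'I_D -> R) (i0 jt jb : 'I_D) (tau beta : R).
Hypotheses (l_ge0 : forall i, 0 <= l i) (l_i0 : l i0 = 1)
  (l_range : forall j, j != i0 -> tau <= l j <= beta).
Hypotheses (jt_i0 : jt != i0) (jb_i0 : jb != i0) (l_jt : l jt = tau) (l_jb : l jb = beta).
Local Notation ratios := (target_ratios l i0).

Let tau_ge0 : 0 <= tau. Proof. by rewrite -l_jt. Qed.

Let tau_le_beta : tau <= beta. Proof. by case/andP: (l_range jt_i0); rewrite l_jt. Qed.

Lemma has_lbound_target_ratios delta : 0 < delta -> has_lbound (ratios delta).
Proof. by move=> delta_gt0; exists 0 => x; apply: target_ratios_ge0. Qed.

Lemma inf_target_ratios delta : 0 < beta < delta -> delta <= 1 / 2 ->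
  inf (ratios delta) = tau * (delta - beta) / (delta * (1 + tau - 2 * beta)).
Proof.
move=> /andP[beta_gt0 beta_delta] delta2; have tau0 := tau_ge0.
set m := tau * (delta - beta) / _.
have s_gt0 : 0 < 1 + tau - 2 * beta by lra.
pose B := (delta - beta) / (1 + tau - 2 * beta).
have B_s : B * (1 + tau - 2 * beta) = delta - beta by rewrite mulfVK ?gt_eqF.
have B_range : 0 <= B <= 1 / 2.
  by apply/andP; split; rewrite /B ?divr_ge0 ?ler_pdivrMr //; lra.
have p_B : B + B * tau + (1 - 2 * B) * beta = delta by lra.
have m_ratio : ratios delta m.
  have delta_le : delta <= B + B * tau + (1 - 2 * B) * beta by rewrite p_B.
  have := mix_ratio l_i0 jt_i0 jb_i0 l_jt l_jb B_range delta_le.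
  suff -> : m = B * tau / (B + B * tau + (1 - 2 * B) * beta) by [].
  by rewrite p_B /m /B; field; rewrite !gt_eqF //; lra.
apply/le_anti/andP; split.
  by apply: ge_inf m_ratio; apply: has_lbound_target_ratios; lra.
apply: lb_le_inf; first by exists m.
move=> _ [t [tD delta_p ->]]; rewrite /m.
have beta_range : 0 < beta < delta by apply/andP.
exact (target_ratio_lb l_i0 l_range tau0 beta_range delta2 tD delta_p).
Qed.

Lemma inf_target_ratios_le0 delta : 0 < delta <= 1 / 2 -> ~~ (0 < beta < delta) ->
  inf (ratios delta) <= 0.
Proof.
move=> /andP[delta_gt0 delta2] not_beta_delta.
have tau0 := tau_ge0; have tau_beta := tau_le_beta.
have [B [B_range delta_le B_tau]] : exists B, [/\ 0 <= B <= 1 / 2,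
    delta <= B + B * tau + (1 - 2 * B) * beta & B * tau = 0].
  have [beta_delta | beta_lt] := leP delta beta.
    by exists 0; rewrite lexx /=; split; lra.
  have beta0 : beta = 0.
    have beta_ge0 : 0 <= beta by lra.
    by move: not_beta_delta; rewrite beta_lt andbT lt_neqAle beta_ge0 andbT negbK => /eqP <-.
  have tau_0 : tau = 0 by lra.
  by exists (1 / 2); rewrite lexx andbT tau_0 beta0; split; lra.
have := ge_inf (has_lbound_target_ratios delta_gt0)
  (mix_ratio l_i0 jt_i0 jb_i0 l_jt l_jb B_range delta_le).
by rewrite B_tau mul0r.
Qed.

Lemma target_ratios_inf_geP eps delta : 0 < eps < 1 -> 0 < delta <= 1 / 2 ->
  (1 - eps <= inf (ratios delta) <->
   0 < beta < delta /\ delta * (1 - eps) <= tau * (delta - beta) / (1 + tau - 2 * beta)).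
Proof.
move=> /andP[eps_gt0 eps_lt1] delta_range; have /andP[delta_gt0 delta2] := delta_range.
have [beta_delta | not_beta_delta] := boolP (0 < beta < delta).
  rewrite inf_target_ratios // invfM mulrA mulrAC ler_pdivlMr // mulrC.
  by split => [|[]].
split => [|[]//].
by have := inf_target_ratios_le0 delta_range not_beta_delta; lra.
Qed.

End TargetRatiosInf.

(** * The eigenbasis of a verification operator *)

Section DiagonalTrace.
Variable R : pzRingType.

Lemma sum_mxtens_index m n (F : 'I_(m * n) -> R) :
  \sum_k F k = \sum_i \sum_j F (mxtens_index (i, j)).
Proof.
rewrite pair_big /=; apply: reindex => /=.
by exists (@mxtens_unindex m n) => k _; [rewrite mxtens_indexK; case: k | exact: mxtens_unindexK].
Qed.

Lemma mxtrace_mul_diag n (N M : 'M[R]_n) : (forall i j, i != j -> N i j = 0) ->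
  \tr (N *m M) = \sum_k N k k * M k k.
Proof.
move=> N_diag; apply: eq_bigr => k _; rewrite mxE (bigD1 k) //= big1 ?addr0 // => l lk.
by rewrite N_diag ?mul0r // eq_sym.
Qed.

Lemma tensmx_diag m n (A : 'M[R]_m) (B : 'M[R]_n) :
  (forall i j, i != j -> A i j = 0) -> (forall i j, i != j -> B i j = 0) ->
  forall k l, k != l -> (A *t B) k l = 0.
Proof.
move=> A_diag B_diag k l; case: (mxtens_indexP k) => k1 k2; case: (mxtens_indexP l) => l1 l2.
rewrite (inj_eq (can_inj (@mxtens_indexK _ _))) xpair_eqE tensmxE.
by have [-> /= /B_diag -> | /A_diag ->] := eqVneq k1 l1; rewrite ?mulr0 ?mul0r.
Qed.

Lemma diag_mx_diag n (d : 'rV[R]_n) i j : i != j -> diag_mx d i j = 0.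
Proof. by rewrite mxE => /negbTE ->. Qed.

End DiagonalTrace.

Section Adjoint.
Variable R : rcfType.
Local Notation C := R[i].

Lemma adjmxE m n (A : 'M[C]_(m, n)) i j : adjmx A i j = Num.conj (A j i).
Proof. by rewrite !mxE. Qed.

Lemma adjmxK m n (A : 'M[C]_(m, n)) : adjmx (adjmx A) = A.
Proof. by apply/matrixP => i j; rewrite !adjmxE conjCK. Qed.

Lemma adjmxM m n p (A : 'M[C]_(m, n)) (B : 'M[C]_(n, p)) :
  adjmx (A *m B) = adjmx B *m adjmx A.
Proof. by rewrite /adjmx trmx_mul map_mxM. Qed.

Lemma adjmxT m n p q (A : 'M[C]_(m, n)) (B : 'M[C]_(p, q)) :
  adjmx (A *t B) = adjmx A *t adjmx B.
Proof. by rewrite /adjmx trmx_tens map_mxT. Qed.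

Lemma tensmx11 m n : (1%:M : 'M[C]_m) *t (1%:M : 'M[C]_n) = 1%:M.
Proof.
apply/matrixP => i j; case: (mxtens_indexP i) => i1 i2; case: (mxtens_indexP j) => j1 j2.
rewrite tensmxE !mxE -natrM (inj_eq (can_inj (@mxtens_indexK _ _))) xpair_eqE.
by case: (i1 == j1); case: (i2 == j2).
Qed.

Lemma psd_conj_diag_ge0 n m (M : 'M[C]_n) (X : 'M[C]_(m, n)) k :
  psd M -> 0 <= (X *m M *m adjmx X) k k.
Proof.
move=> /(_ (adjmx (row k X))); rewrite adjmxK.
suff -> : (row k X *m M *m adjmx (row k X)) 0 0 = (X *m M *m adjmx X) k k by [].
by rewrite -!row_mul !mxE; apply: eq_bigr => l _; rewrite !adjmxE !mxE.
Qed.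

Lemma ge0_complexE (z : C) : 0 <= z -> z = (complex.Re z)%:C.
Proof. by case: z => a b; rewrite lecE /= => /andP[/eqP -> _]. Qed.

End Adjoint.

Section Swap.
Variables (R : rcfType) (D : nat).
Local Notation C := R[i].
Local Notation S := (swapmx R D).

Definition swap_index (k : 'I_(D * D)) : 'I_(D * D) :=
  mxtens_index ((mxtens_unindex k).2, (mxtens_unindex k).1).

Lemma swap_indexK : involutive swap_index.
Proof. by move=> k; rewrite /swap_index mxtens_indexK mxtens_unindexK. Qed.

Lemma swapmxE i j : S i j = (i == swap_index j)%:R.
Proof.
rewrite mxE; congr (_%:R).
case: (mxtens_indexP i) => i1 i2; case: (mxtens_indexP j) => j1 j2.
by rewrite /swap_index !mxtens_indexK (inj_eq (can_inj (@mxtens_indexK _ _))).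
Qed.

Lemma swapmx_conjE (M : 'M[C]_(D * D)) i j :
  (S *m M *m S) i j = M (swap_index i) (swap_index j).
Proof.
rewrite mxE; under eq_bigr => k _ do rewrite mxE swapmxE.
rewrite sum_nat_eqr; under eq_bigr => l _ do rewrite swapmxE eq_sym (canF_eq swap_indexK).
by rewrite sum_nat_eql.
Qed.

Lemma swapmx_tens (A B : 'M[C]_D) : S *m (A *t B) *m S = B *t A.
Proof.
apply/matrixP => i j; rewrite swapmx_conjE.
case: (mxtens_indexP i) => i1 i2; case: (mxtens_indexP j) => j1 j2.
by rewrite /swap_index !mxtens_indexK /= !tensmxE mulrC.
Qed.

Lemma swapmxK : S *m S = 1%:M.
Proof.
apply/matrixP => i j; have := swapmx_conjE 1%:M i j; rewrite mulmx1 => ->.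
by rewrite !mxE (inj_eq (can_inj swap_indexK)).
Qed.

Lemma swapmx_conjM (A B E : 'M[C]_(D * D)) :
  S *m (A *m B *m E) *m S = (S *m A *m S) *m (S *m B *m S) *m (S *m E *m S).
Proof.
by rewrite !mulmxA -[S *m A *m S *m S]mulmxA swapmxK mulmx1
  -[S *m A *m B *m S *m S]mulmxA swapmxK mulmx1.
Qed.

End Swap.

Section Spectral.
Variables (R : rcfType) (D : nat) (Om : 'M[R[i]]_D).
Hypothesis Om_herm : adjmx Om = Om.
Local Notation U := (spectralmx Om).
Local Notation lam := (spectral_diag Om).

Lemma spectralmx_unitary : U *m adjmx U = 1%:M.
Proof. exact/unitarymxP/spectral_unitarymx. Qed.

Lemma spectralmx_unitaryV : adjmx U *m U = 1%:M.
Proof. exact/mulmx1C/spectralmx_unitary. Qed.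

Lemma spectral_decomp : Om = adjmx U *m diag_mx lam *m U.
Proof.
have Om_normal : Om \is normalmx.
  by apply/normalmxP; change (Om *m adjmx Om = adjmx Om *m Om); rewrite Om_herm.
rewrite -[adjmx U](invmx_unitary (spectral_unitarymx Om)).
exact/orthomx_spectralP.
Qed.

Lemma spectral_conj : U *m Om *m adjmx U = diag_mx lam.
Proof.
rewrite [X in _ *m X *m _]spectral_decomp !mulmxA spectralmx_unitary mul1mx.
by rewrite -mulmxA spectralmx_unitary mulmx1.
Qed.

Lemma spectralmx_mul : U *m Om = diag_mx lam *m U.
Proof. by rewrite -spectral_conj -!mulmxA spectralmx_unitaryV mulmx1. Qed.

Lemma spectral_row_eigen i : row i U *m Om = lam 0 i *: row i U.
Proof. by rewrite -row_mul spectralmx_mul row_mul row_diag_mx -scalemxAl -rowE. Qed.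

Lemma eigenvalue_spectralP a : reflect (exists i, a = lam 0 i) (eigenvalue Om a).
Proof.
apply: (iffP idP) => [/eigenvalueP [v v_eigen v_neq0] | [i ->]]; last first.
  apply/eigenvalueP; exists (row i U); first exact: spectral_row_eigen.
  apply/negP => /eqP row0.
  have : row i U *m adjmx U = row i 1%:M by rewrite -row_mul spectralmx_unitary.
  by rewrite row0 mul0mx => /rowP /(_ i); rewrite !mxE eqxx => /eqP; rewrite eq_sym oner_eq0.
set x := v *m adjmx U.
have x_eigen : x *m diag_mx lam = a *: x.
  by rewrite /x -spectral_conj !mulmxA -[v *m adjmx U *m U]mulmxA spectralmx_unitaryV
    mulmx1 v_eigen scalemxAl.
have [j xj_neq0] : exists j, x 0 j != 0.
  apply/existsP; apply: contraNT v_neq0; rewrite negb_exists => /forallP x0.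
  have -> : v = x *m U by rewrite /x -mulmxA spectralmx_unitaryV mulmx1.
  suff -> : x = 0 by rewrite mul0mx.
  by apply/matrixP => i k; rewrite ord1 [RHS]mxE; apply/eqP; rewrite -[_ == _]negbK x0.
exists j; move/matrixP: x_eigen => /(_ 0 j); rewrite mul_mx_diag mxE [(a *: x) 0 j]mxE => /eqP.
by rewrite (mulrC a) -subr_eq0 -mulrBr mulf_eq0 (negbTE xj_neq0) subr_eq0 => /eqP.
Qed.

End Spectral.

Definition spectral_re (R : rcfType) D (Om : 'M[R[i]]_D) i : R :=
  complex.Re (spectral_diag Om 0 i).

Section VerificationOperator.
Variables (R : rcfType) (D : nat) (Om : 'M[R[i]]_D) (psi : 'cV[R[i]]_D).
Hypotheses (Om_herm : adjmx Om = Om) (Om_ge0 : psd Om) (Om_le1 : psd (1%:M - Om)).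
Local Notation U := (spectralmx Om).
Local Notation lam := (spectral_diag Om).

Lemma spectral_diag_ge0 i : 0 <= lam 0 i.
Proof. by have := psd_conj_diag_ge0 U i Om_ge0; rewrite spectral_conj // mxE eqxx. Qed.

Lemma spectral_diag_le1 i : lam 0 i <= 1.
Proof.
have := psd_conj_diag_ge0 U i Om_le1.
by rewrite mulmxBr mulmxBl mulmx1 spectralmx_unitary spectral_conj // !mxE eqxx subr_ge0.
Qed.

Lemma spectral_reE i : lam 0 i = (spectral_re Om i)%:C.
Proof. exact/ge0_complexE/spectral_diag_ge0. Qed.

Lemma spectral_re_ge0 i : 0 <= spectral_re Om i.
Proof. by rewrite -ler0c -spectral_reE spectral_diag_ge0. Qed.

Lemma spectral_re_le1 i : spectral_re Om i <= 1.
Proof. by rewrite -lecR -spectral_reE spectral_diag_le1. Qed.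

Lemma eigenvalue_spectral_reP (a : R) :
  reflect (exists i, spectral_re Om i = a) (eigenvalue Om a%:C).
Proof.
apply: (iffP (eigenvalue_spectralP Om_herm _)).
  by move=> [k]; rewrite spectral_reE => /complexI ->; exists k.
by move=> [k <-]; exists k; rewrite spectral_reE.
Qed.

Hypotheses (Om_psi : Om *m psi = psi) (psi_unit : unit_vector psi).
Hypothesis Om_rank1 : \rank (eigenspace Om 1) = 1%N.

Lemma spectral_diag_eq1_inj i j : lam 0 i = 1 -> lam 0 j = 1 -> i = j.
Proof.
move=> lam_i lam_j; apply/eqP/negPn/negP => i_neq_j.
pose f (k : 'I_2) := if k == 0 then i else j.
pose X := rowsub f U.
have X_unitary : X *m adjmx X = 1%:M.
  apply/matrixP => a b; rewrite !mxE.
  have -> : \sum_k X a k * adjmx X k b = (U *m adjmx U) (f a) (f b).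
    by rewrite !mxE; apply: eq_bigr => k _; rewrite !adjmxE !mxE.
  rewrite spectralmx_unitary !mxE; congr (_%:R).
  case: a b => [[|[|a]] a_lt] [[|[|b]] b_lt] //=; rewrite /f /= ?eqxx //.
    by rewrite (negbTE i_neq_j).
  by rewrite eq_sym (negbTE i_neq_j).
have : (X <= eigenspace Om 1)%MS.
  apply/row_subP => k; rewrite row_rowsub; apply/eigenspaceP.
  by rewrite spectral_row_eigen // /f; case: (k == 0); rewrite ?lam_i ?lam_j.
move/mxrankS; rewrite Om_rank1 (mxrank_unitary (_ : X \is unitarymx)) //.
exact/unitarymxP.
Qed.

Lemma spectral_target : exists i0, [/\ lam 0 i0 = 1, forall j, j != i0 -> lam 0 j != 1
  & U *m ketbra psi *m adjmx U = delta_mx i0 i0].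
Proof.
(* [w] holds the coordinates of [psi] in the eigenbasis; [Om psi = psi] confines
   it to the coordinates of eigenvalue 1, of which there is only one. *)
set w := U *m psi.
have lam_w i : lam 0 i * w i 0 = w i 0.
  have : U *m Om *m psi = w by rewrite -mulmxA Om_psi.
  by rewrite spectralmx_mul // -mulmxA -/w mul_diag_mx => /matrixP /(_ i 0); rewrite mxE.
have w_norm : \sum_i Num.conj (w i 0) * w i 0 = 1.
  have : (adjmx w *m w) 0 0 = 1.
    by rewrite /w adjmxM mulmxA -(mulmxA (adjmx psi)) spectralmx_unitaryV // mulmx1.
  by rewrite mxE => <-; apply: eq_bigr => k _; rewrite adjmxE.
have [i0 w_i0] : exists i0, w i0 0 != 0.
  apply/existsP; apply: contraT; rewrite negb_exists => /forallP w0.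
  move: w_norm; rewrite big1 => [/eqP|k _]; first by rewrite eq_sym oner_eq0.
  by move/negPn/eqP: (w0 k) ->; rewrite mulr0.
have lam_i0 : lam 0 i0 = 1.
  by apply: (mulIf w_i0); rewrite mul1r lam_w.
have lam_neq1 j : j != i0 -> lam 0 j != 1.
  by apply: contra => /eqP lam_j; apply/eqP/spectral_diag_eq1_inj.
have w_j j : j != i0 -> w j 0 = 0.
  move=> /lam_neq1 lam_j; apply/eqP; move: (lam_w j) => /eqP.
  by rewrite -subr_eq0 -{2}(mul1r (w j 0)) -mulrBl mulf_eq0 subr_eq0 (negbTE lam_j).
have w_i0_norm : Num.conj (w i0 0) * w i0 0 = 1.
  by rewrite -w_norm (bigD1 i0) //= big1 ?addr0 // => k /w_j ->; rewrite mulr0.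
exists i0; split => //.
have -> : U *m ketbra psi *m adjmx U = w *m adjmx w by rewrite /ketbra /w adjmxM !mulmxA.
apply/matrixP => a b; rewrite !mxE big_ord1 adjmxE.
have [-> | /w_j ->] := eqVneq a i0; last by rewrite mul0r.
have [-> | /w_j ->] := eqVneq b i0; last by rewrite conjC0 mulr0 andbF.
by rewrite mulrC w_i0_norm.
Qed.

End VerificationOperator.

Section TwoCopy.
Variables (R : rcfType) (D : nat) (Om : 'M[R[i]]_D).
Local Notation C := R[i].
Local Notation U := (spectralmx Om).
Local Notation lam := (spectral_diag Om).
Local Notation W := (U *t U).
Local Notation S := (swapmx R D).

Lemma tens_spectralmx_unitary : W *m adjmx W = 1%:M.
Proof. by rewrite adjmxT tensmx_mul spectralmx_unitary tensmx11. Qed.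

Lemma tens_spectralmx_unitaryV : adjmx W *m W = 1%:M.
Proof. exact/mulmx1C/tens_spectralmx_unitary. Qed.

Definition pair_weight (rho : 'M[C]_(D * D)) i j :=
  (W *m rho *m adjmx W) (mxtens_index (i, j)) (mxtens_index (i, j)).

Lemma mxtrace_tens_spectral (M rho : 'M[C]_(D * D)) :
  \tr (M *m rho) = \tr ((W *m M *m adjmx W) *m (W *m rho *m adjmx W)).
Proof.
rewrite !mulmxA -[W *m M *m adjmx W *m W]mulmxA tens_spectralmx_unitaryV mulmx1.
by rewrite [RHS]mxtrace_mulC !mulmxA tens_spectralmx_unitaryV mul1mx.
Qed.

Lemma mxtrace_pair_weight rho : \tr rho = \sum_i \sum_j pair_weight rho i j.
Proof.
have := mxtrace_tens_spectral 1%:M rho.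
rewrite mul1mx mulmx1 tens_spectralmx_unitary => ->.
rewrite mxtrace_mul_diag => [|i j /negbTE ij]; last by rewrite mxE ij.
rewrite sum_mxtens_index; apply: eq_bigr => i _; apply: eq_bigr => j _.
by rewrite mxE eqxx mul1r.
Qed.

Lemma pair_weight_ge0 rho i j : psd rho -> 0 <= pair_weight rho i j.
Proof. exact: psd_conj_diag_ge0. Qed.

Lemma pair_weight_sym rho i j : perm_invariant rho -> pair_weight rho i j = pair_weight rho j i.
Proof.
move=> rho_perm; rewrite /pair_weight -{1}rho_perm.
have S_W : S *m W *m S = W := swapmx_tens U U.
have S_W' : S *m adjmx W *m S = adjmx W by rewrite adjmxT swapmx_tens.
have -> : W *m (S *m rho *m S) *m adjmx W = S *m (W *m rho *m adjmx W) *m S.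
  by rewrite swapmx_conjM S_W S_W'.
by rewrite swapmx_conjE /swap_index !mxtens_indexK.
Qed.

Hypothesis Om_herm : adjmx Om = Om.

Lemma p_rho_pair_weight rho :
  p_rho Om rho = \sum_i \sum_j lam 0 i * pair_weight rho i j.
Proof.
have W_Om : W *m (Om *t 1%:M) *m adjmx W = diag_mx lam *t 1%:M.
  by rewrite adjmxT !tensmx_mul spectral_conj // mulmx1 spectralmx_unitary.
rewrite /p_rho mxtrace_tens_spectral W_Om mxtrace_mul_diag; last first.
  by apply: tensmx_diag => [|i j /negbTE ij]; [exact: diag_mx_diag | rewrite mxE ij].
rewrite sum_mxtens_index; apply: eq_bigr => i _; apply: eq_bigr => j _.
by rewrite tensmxE [diag_mx _ _ _]mxE [1%:M _ _]mxE !eqxx mulr1n mulr1.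
Qed.

Variables (psi : 'cV[C]_D) (i0 : 'I_D).
Hypothesis target : U *m ketbra psi *m adjmx U = delta_mx i0 i0.

Lemma f_rho_pair_weight rho :
  f_rho Om psi rho = \sum_i lam 0 i * pair_weight rho i i0.
Proof.
have W_Om : W *m (Om *t ketbra psi) *m adjmx W = diag_mx lam *t delta_mx i0 i0.
  by rewrite adjmxT !tensmx_mul spectral_conj // target.
rewrite /f_rho mxtrace_tens_spectral W_Om mxtrace_mul_diag; last first.
  apply: tensmx_diag => [|i j /negbTE ij]; first exact: diag_mx_diag.
  rewrite mxE; case: (i =P i0) => [i_i0 | _] //=.
  by rewrite i_i0 eq_sym in ij; rewrite ij.
rewrite sum_mxtens_index; apply: eq_bigr => i _; rewrite (bigD1 i0) //= big1 ?addr0.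
  by rewrite tensmxE [diag_mx _ _ _]mxE [delta_mx _ _ _ _]mxE !eqxx mulr1n mulr1.
by move=> j /negbTE j_i0; rewrite tensmxE [delta_mx _ _ _ _]mxE j_i0 andbF mulr0 mul0r.
Qed.

End TwoCopy.

Section PairStates.
Variables (R : rcfType) (D : nat) (Om : 'M[R[i]]_D).
Local Notation W := (spectralmx Om *t spectralmx Om).
Variable h : 'I_D -> 'I_D -> R[i].
Hypotheses (h_ge0 : forall i j, 0 <= h i j) (h_sym : forall i j, h i j = h j i).

Definition pair_state : 'M[R[i]]_(D * D) :=
  adjmx W *m diag_mx (\row_k h (mxtens_unindex k).1 (mxtens_unindex k).2) *m W.

Lemma pair_weight_state i j : pair_weight Om pair_state i j = h i j.
Proof.
rewrite /pair_weight /pair_state !mulmxA tens_spectralmx_unitary mul1mx.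
by rewrite -mulmxA tens_spectralmx_unitary mulmx1 !mxE eqxx mulr1n mxtens_indexK.
Qed.

Lemma psd_pair_state : psd pair_state.
Proof.
move=> v; rewrite /pair_state; set d := diag_mx _.
have -> : adjmx v *m (adjmx W *m d *m W) *m v = adjmx (W *m v) *m d *m (W *m v).
  by rewrite adjmxM !mulmxA.
rewrite mxE; apply: sumr_ge0 => k _; rewrite mul_mx_diag !mxE mulrAC.
by rewrite mulr_ge0 // mulrC mul_conjC_ge0.
Qed.

Lemma perm_invariant_pair_state : perm_invariant pair_state.
Proof.
have S_W : swapmx R D *m W *m swapmx R D = W := swapmx_tens _ _.
have S_W' : swapmx R D *m adjmx W *m swapmx R D = adjmx W by rewrite adjmxT swapmx_tens.
rewrite /perm_invariant /pair_state swapmx_conjM S_W S_W'.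
congr (_ *m _ *m _); apply/matrixP => a b; rewrite swapmx_conjE !mxE.
rewrite (inj_eq (can_inj (@swap_indexK D))); case: (a == b) => //.
by rewrite /swap_index mxtens_indexK /= h_sym.
Qed.

End PairStates.

(** * Reduction of F(1, delta, Om) to the linear-fractional program *)

Section Reduction.
Variables (R : rcfType) (D : nat) (Om : 'M[R[i]]_D) (psi : 'cV[R[i]]_D) (i0 : 'I_D).
Hypotheses (Om_herm : adjmx Om = Om) (Om_ge0 : psd Om).
Hypothesis target : spectralmx Om *m ketbra psi *m adjmx (spectralmx Om) = delta_mx i0 i0.
Local Notation l := (spectral_re Om).

Lemma pass_target_real rho t : (forall i j, pair_weight Om rho i j = (t i j)%:C) ->
  p_rho Om rho = (pass_prob l t)%:C /\ f_rho Om psi rho = (target_prob l i0 t)%:C.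
Proof.
move=> w_t; rewrite p_rho_pair_weight // (f_rho_pair_weight Om_herm target).
rewrite /pass_prob /target_prob !rmorph_sum; split; apply: eq_bigr => i _.
  by rewrite rmorph_sum; apply: eq_bigr => j _; rewrite w_t spectral_reE // rmorphM.
by rewrite w_t spectral_reE // rmorphM.
Qed.

Lemma density_sym_distribution rho : density rho -> perm_invariant rho ->
  exists t, [/\ sym_distribution t, p_rho Om rho = (pass_prob l t)%:C
              & f_rho Om psi rho = (target_prob l i0 t)%:C].
Proof.
move=> [rho_ge0 rho_tr1] rho_perm.
pose t i j := complex.Re (pair_weight Om rho i j).
have w_t i j : pair_weight Om rho i j = (t i j)%:C.
  exact/ge0_complexE/pair_weight_ge0.
have [p_t f_t] := pass_target_real w_t.
exists t; split => //; split.
- by move=> i j; rewrite -ler0c -w_t pair_weight_ge0.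
- by move=> i j; rewrite /t pair_weight_sym.
- apply: (@complexI R); rewrite rmorph_sum rmorph1 -rho_tr1 (mxtrace_pair_weight Om).
  by apply: eq_bigr => i _; rewrite rmorph_sum; apply: eq_bigr => j _; rewrite w_t.
Qed.

Lemma sym_distribution_state t : sym_distribution t ->
  exists rho, [/\ density rho, perm_invariant rho, p_rho Om rho = (pass_prob l t)%:C
                & f_rho Om psi rho = (target_prob l i0 t)%:C].
Proof.
move=> [t_ge0 t_sym t_mass].
pose h i j := (t i j)%:C.
have h_ge0 i j : 0 <= h i j by rewrite ler0c.
have h_sym i j : h i j = h j i by rewrite /h t_sym.
have [p_t f_t] := pass_target_real (pair_weight_state Om h).
exists (pair_state Om h); split => //; last exact: perm_invariant_pair_state.
split; first exact: psd_pair_state.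
rewrite (mxtrace_pair_weight Om) -(rmorph1 (real_complex R)) -t_mass rmorph_sum.
by apply: eq_bigr => i _; rewrite rmorph_sum; apply: eq_bigr => j _; rewrite pair_weight_state.
Qed.

End Reduction.

Lemma F1_inf_target_ratios (R : realType) D (Om : 'M[R[i]]_D) psi i0 delta :
  adjmx Om = Om -> psd Om ->
  spectralmx Om *m ketbra psi *m adjmx (spectralmx Om) = delta_mx i0 i0 ->
  F1 delta Om psi = inf (target_ratios (spectral_re Om) i0 delta).
Proof.
move=> Om_herm Om_ge0 target; rewrite /F1; congr inf; apply/seteqP; split => x.
  move=> [rho [rho_dens rho_perm delta_p x_ratio]].
  have [t [tD p_t f_t]] := density_sym_distribution Om_herm Om_ge0 target rho_dens rho_perm.
  exists t; split => //; first by rewrite -lecR -p_t.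
  by apply: (@complexI R); rewrite x_ratio p_t f_t fmorph_div.
move=> [t [tD delta_p ->]].
have [rho [rho_dens rho_perm p_t f_t]] := sym_distribution_state Om_herm Om_ge0 target tD.
by exists rho; split; rewrite // ?p_t ?lecR // f_t fmorph_div.
Qed.

Unset Implicit Arguments.
Set Strict Implicit.

Theorem corollary7 (R : realType) (D : nat) (Om : 'M[R[i]]_D) (psi : 'cV[R[i]]_D)
  (beta tau eps delta : R) :
  (1 < D)%N ->
  verification_operator Om psi ->
  (* beta is the second largest eigenvalue of Om (1 being the largest, simple) *)
  eigenvalue Om beta%:C -> beta != 1 ->
  (forall a : R[i], eigenvalue Om a -> a != 1 -> a <= beta%:C) ->
  (* tau is the smallest eigenvalue of Om *)
  eigenvalue Om tau%:C ->
  (forall a : R[i], eigenvalue Om a -> tau%:C <= a) ->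
  0 < eps < 1 -> 0 < delta <= 1 / 2 ->
  (1 - eps <= F1 delta Om psi <->
   (0 < beta < delta /\
    delta * (1 - eps) <= tau * (delta - beta) / (1 + tau - 2 * beta))).
Proof.
(* [1 < D] is implied by the eigenvalue [beta <> 1]. *)
move=> _ [psi_unit Om_herm [Om_ge0 Om_le1] Om_psi Om_rank1] beta_eig beta_neq1 beta_max
  tau_eig tau_min eps_range delta_range.
have [i0 [lam_i0 lam_neq1 target]] := spectral_target Om_herm Om_psi psi_unit Om_rank1.
rewrite (F1_inf_target_ratios delta Om_herm Om_ge0 target).
have eigP := eigenvalue_spectral_reP Om_herm Om_ge0.
have /eigP [jb l_jb] := beta_eig.
have /eigP [jt l_jt] := tau_eig.
set l := spectral_re Om in eigP l_jb l_jt *.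
have l_i0 : l i0 = 1 by apply: (@complexI R); rewrite -spectral_reE.
have l_range j : j != i0 -> tau <= l j <= beta.
  move=> /lam_neq1; rewrite spectral_reE // => l_j_neq1.
  have l_j_eig : eigenvalue Om (l j)%:C by apply/eigP; exists j.
  by rewrite -!lecR tau_min // beta_max.
have jb_i0 : jb != i0 by apply: contra beta_neq1 => /eqP jb_i0; rewrite -l_jb jb_i0 l_i0.
have jt_i0 : jt != i0.
  apply: contra beta_neq1 => /eqP jt_i0.
  have beta_le1 : beta <= 1 by rewrite -l_jb spectral_re_le1.
  have := tau_min _ beta_eig; rewrite lecR -l_jt jt_i0 l_i0 => one_le_beta.
  by rewrite eq_le beta_le1.
exact (target_ratios_inf_geP (spectral_re_ge0 Om_herm Om_ge0) l_i0 l_range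
  jt_i0 jb_i0 l_jt l_jb eps_range delta_range).
Qed.
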